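(* Let $K$ be a finite simplicial complex, $\mathcal V$ a multivector field on $K$, $N\subseteq K$ closed, and let $(P,E)$ be an index pair in $N$ under $\mathcal V$. Let $\mathcal A$ be a set of multivectors of $\mathcal V$ such that $\langle\mathcal A\rangle\subseteq N$, $\langle\mathcal A\rangle\cap E=\emptyset$ and $\mathrm{mo}(\langle\mathcal A\rangle)\subseteq P$. Then $(P\cup\langle\mathcal A\rangle,E)$ is an index pair in $N$ under $\mathcal V$ (namely, for $\mathrm{inv}_{\mathcal V}((P\cup\langle\mathcal A\rangle)\setminus E)$).
   Context: $\sigma\le\tau$ means $\sigma$ is a face of $\tau$; $\mathrm{cl}(A)$ is the set of faces of simplices of $A$; $A$ is closed if $A=\mathrm{cl}(A)$; $\mathrm{mo}(A)=\mathrm{cl}(A)\setminus A$. A multivector is a convex subset of $K$ w.r.t. $\le$; a multivector field $\mathcal V$ is a partition of $K$ into multivectors; $[\sigma]_{\mathcal V}$ is the multivector containing $\sigma$. For a set $\mathcal A$ of multivectors, $\langle\mathcal A\rangle=\bigcup_{A\in\mathcal A}A$. $F_{\mathcal V}(\sigma)=[\sigma]_{\mathcal V}\cup\mathrm{cl}(\sigma)$ and $F_{\mathcal V}(A)=\bigcup_{\sigma\in A}F_{\mathcal V}(\sigma)$. A path is a finite sequence with $\sigma_j\in F_{\mathcal V}(\sigma_{j-1})$; a solution is a bi-infinite one. A multivector $V$ is critical if $H_k(\mathrm{cl}(V),\mathrm{mo}(V))\ne0$ for some $k$, regular otherwise. A solution $\rho$ is essential if whenever $[\rho(i)]_{\mathcal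 V}$ is regular there are $i^-<i<i^+$ with $[\rho(i^\pm)]_{\mathcal V}\ne[\rho(i)]_{\mathcal V}$. $\mathrm{inv}_{\mathcal V}(A)$ is the set of simplices of $A$ lying on an essential solution with image in $A$. An index pair in $N$ for an invariant set $S$ (under $\mathcal V$) is a pair of closed sets $E\subseteq P\subseteq N$ with: (1) $F_{\mathcal V}(E)\cap N\subseteq E$; (2) $F_{\mathcal V}(P)\cap N\subseteq P$; (3) $F_{\mathcal V}(P\setminus E)\subseteq N$; (4) $S=\mathrm{inv}_{\mathcal V}(P\setminus E)$. ''Index pair in $N$ under $\mathcal V$'' means an index pair in $N$ for $\mathrm{inv}_{\mathcal V}(P\setminus E)$. *)

From HB Require Import structures.
From mathcomp Require Import all_boot all_order all_algebra.
From mathcomp Require Import boolp.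
Set Implicit Arguments. Unset Strict Implicit. Unset Printing Implicit Defensive.
Import GRing.Theory Num.Theory.
Local Open Scope ring_scope.

Section MVF.
Variable V : finType.
Notation simplex := {set V}.
Notation cset := {set {set V}}.

(* A finite abstract simplicial complex: nonempty simplices, closed under
   nonempty subsets.  The face relation sigma <= tau is sigma \subset tau. *)
Definition simplicial_complex (K : cset) : Prop :=
  set0 \notin K /\
  forall s t : simplex, s \in K -> t \subset s -> t != set0 -> t \in K.

Variable K : cset.

Definition cl (A : cset) : cset := [set s in K | [exists t in A, s \subset t]].
Definition mo (A : cset) : cset := cl A :\: A.
Definition is_closed (A : cset) : bool := cl A == A.

Definition convex (A : cset) : Prop :=
  forall x y z : simplex, x \in A -> z \in A -> y \in K ->
    x \subset y -> y \subset z -> y \in A.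

Definition multivector_field (Vf : {set cset}) : Prop :=
  partition Vf K /\ forall A, A \in Vf -> convex A.

Variable Vf : {set cset}.

Definition mv_of (s : simplex) : cset := pblock Vf s.
Definition Fv (s : simplex) : cset := mv_of s :|: cl [set s].
Definition FvS (A : cset) : cset := \bigcup_(s in A) Fv s.
Definition cover_of (AA : {set cset}) : cset := cover AA.

(* Relative simplicial homology H_k(cl A, mo A) with coefficients in a field R.
   Chains are finitely supported functions on simplices; a relative k-chain is
   supported on simplices of cl A \ mo A with k+1 vertices. Orientation is
   induced by the order of V (enum_rank). *)
Variable R : fieldType.

Definition face_sign (sg tau : simplex) : R :=
  \sum_(v in sg :\: tau) (-1) ^+ #|[set w in sg | (enum_rank w < enum_rank v)%N]|.

Definition rel_bd (A : cset) (c : {ffun simplex -> R}) : {ffun simplex -> R} :=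
  [ffun tau => if tau \in cl A :\: mo A then
     \sum_(sg in cl A :\: mo A | (tau \subset sg) && (#|sg| == #|tau|.+1))
        face_sign sg tau * c sg
   else 0].

Definition rel_chain (A : cset) (k : nat) (c : {ffun simplex -> R}) : Prop :=
  forall s, c s != 0 -> (s \in cl A :\: mo A) && (#|s| == k.+1).

Definition homology_nonzero (A : cset) (k : nat) : Prop :=
  exists c, rel_chain A k c /\ rel_bd A c = 0 /\
    ~ exists d, rel_chain A k.+1 d /\ rel_bd A d = c.

Definition critical (A : cset) : Prop := exists k, homology_nonzero A k.
Definition regular (A : cset) : Prop := ~ critical A.

Definition solution (rho : int -> simplex) : Prop :=
  forall i : int, rho (i + 1)%R \in Fv (rho i).

Definition essential (rho : int -> simplex) : Prop :=
  solution rho /\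
  forall i : int, regular (mv_of (rho i)) ->
    (exists j : int, (j < i)%R /\ mv_of (rho j) != mv_of (rho i)) /\
    (exists j : int, (i < j)%R /\ mv_of (rho j) != mv_of (rho i)).

Definition inv (A : cset) : cset :=
  [set s in A | `[< exists rho, essential rho /\ (forall i, rho i \in A) /\
                                 exists i, rho i = s >]].

Definition index_pair (N S P E : cset) : Prop :=
  [/\ is_closed P, is_closed E, E \subset P & P \subset N] /\
  [/\ FvS E :&: N \subset E,
      FvS P :&: N \subset P,
      FvS (P :\: E) \subset N &
      S = inv (P :\: E)].

Definition index_pair_under (N P E : cset) : Prop :=
  index_pair N (inv (P :\: E)) P E.

End MVF.

From HB Require Import structures.
From mathcomp Require Import all_boot all_order all_algebra.
From mathcomp Require Import boolp.

Set Implicit Arguments.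
Unset Strict Implicit.
Unset Printing Implicit Defensive.

(* A union A of whole multivectors is mapped by F_V into cl A: each multivector
   of a simplex of A lies in A, and the faces of A lie in cl A.  Since
   cl A = A ∪ mo A with mo A ⊆ P, and cl A ⊆ N because N is closed, adding A
   to P keeps P closed and preserves conditions (1)–(3); condition (4) holds
   by the definition of an index pair under V. *)

Section Closure.
Variables (V : finType) (K : {set {set V}}).
Implicit Types X Y : {set {set V}}.

Lemma cl_subset X Y : X \subset Y -> cl K X \subset cl K Y.
Proof.
move=> XY; apply/subsetP=> s; rewrite !inE => /andP[sK /existsP[t /andP[tX st]]].
by rewrite sK; apply/existsP; exists t; rewrite st (subsetP XY).
Qed.

Lemma sub_cl X : X \subset K -> X \subset cl K X.
Proof.
move=> XK; apply/subsetP=> s sX; rewrite inE (subsetP XK) //.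
by apply/existsP; exists s; rewrite sX subxx.
Qed.

Lemma cl_sub_closed X Y : is_closed K Y -> X \subset Y -> cl K X \subset Y.
Proof. by move=> /eqP clY XY; rewrite -clY cl_subset. Qed.

Lemma clU X Y : cl K (X :|: Y) = cl K X :|: cl K Y.
Proof.
apply/eqP; rewrite eqEsubset subUset !cl_subset ?subsetUl ?subsetUr // !andbT.
apply/subsetP=> s; rewrite !inE => /andP[-> /existsP[t /andP[]]].
by rewrite inE => /orP[] tXY st; apply/orP; [left|right];
  apply/existsP; exists t; rewrite tXY.
Qed.

Lemma cl_sub_setU_mo X : cl K X \subset X :|: mo K X.
Proof. by apply/subsetP=> s sX; rewrite in_setU in_setD sX andbT orbN. Qed.

Lemma closedU_mo_sub X Y :
  is_closed K X -> Y \subset K -> mo K Y \subset X -> is_closed K (X :|: Y).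
Proof.
move=> clX YK moY; rewrite /is_closed eqEsubset clU subUset (eqP clX) subsetUl /=.
apply/andP; split.
  apply: subset_trans (cl_sub_setU_mo Y) _.
  by rewrite subUset subsetUr (subset_trans moY) ?subsetUl.
by rewrite subUset subsetUl (subset_trans (sub_cl YK)) ?subsetUr.
Qed.

End Closure.

Section Multivectors.
Variables (V : finType) (K : {set {set V}}) (Vf : {set {set {set V}}}).
Hypothesis trivVf : trivIset Vf.
Implicit Types (X Y : {set {set V}}) (AA : {set {set {set V}}}).

Lemma mv_of_sub_cover AA s :
  AA \subset Vf -> s \in cover_of AA -> mv_of Vf s \subset cover_of AA.
Proof.
move=> AAVf /bigcupP[B BAA sB].
by rewrite /mv_of (def_pblock trivVf (subsetP AAVf _ BAA) sB) bigcup_sup.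
Qed.

Lemma FvSU X Y : FvS K Vf (X :|: Y) = FvS K Vf X :|: FvS K Vf Y.
Proof. exact: bigcup_setU. Qed.

Lemma FvS_cover_sub_cl AA :
  AA \subset Vf -> cover_of AA \subset K ->
  FvS K Vf (cover_of AA) \subset cl K (cover_of AA).
Proof.
move=> AAVf AK; apply/bigcupsP=> s sA; rewrite subUset.
rewrite (subset_trans (mv_of_sub_cover AAVf sA)) ?sub_cl //=.
by rewrite cl_subset // sub1set.
Qed.

End Multivectors.

Theorem proposition29 (V : finType) (R : fieldType)
  (K : {set {set V}}) (Vf : {set {set {set V}}}) (N P E : {set {set V}})
  (AA : {set {set {set V}}}) :
  simplicial_complex K ->
  multivector_field K Vf ->
  N \subset K -> is_closed K N ->
  index_pair_under K Vf R N P E ->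
  AA \subset Vf ->
  cover_of AA \subset N ->
  cover_of AA :&: E = set0 ->
  mo K (cover_of AA) \subset P ->
  index_pair_under K Vf R N (P :|: cover_of AA) E.
Proof.
move=> _ [partVf _] NK clN [[clP clE EP PN] [FvE FvP FvPE _]] AAVf AN AE moP.
set A := cover_of AA in AN AE moP *.
have AK : A \subset K := subset_trans AN NK.
have FvA : FvS K Vf A \subset cl K A.
  by apply: FvS_cover_sub_cl; rewrite ?AK //; case/and3P: partVf.
have clA_PA : cl K A \subset P :|: A.
  apply: subset_trans (cl_sub_setU_mo K A) _.
  by rewrite subUset subsetUr (subset_trans moP) ?subsetUl.
have PAE : (P :|: A) :\: E = (P :\: E) :|: A.
  by rewrite setDUl; congr (_ :|: _); apply/setDidPl; rewrite -setI_eq0 AE.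
split; split => //.
- exact: closedU_mo_sub.
- by rewrite subsetU ?EP.
- by rewrite subUset PN AN.
- rewrite FvSU setIUl subUset (subset_trans FvP (subsetUl _ _)) /=.
  exact: subset_trans (subsetIl _ _) (subset_trans FvA clA_PA).
- by rewrite PAE FvSU subUset FvPE (subset_trans FvA (cl_sub_closed clN AN)).
Qed.
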